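(* Let $N\ge2$, $d\in\mathbb{N}^*$, $\alpha>0$, $A\in\mathbb{R}_+^{N\times N}$, and let $\psi:\mathbb{R}_+\to\mathbb{R}_+$ satisfy $(r_1-r_2)(\psi(r_1)-\psi(r_2))\le0$ for all $r_1,r_2\ge0$ and $0<\psi(r)\le\psi(0)\le1$. Assume the hierarchical leadership condition: $A_{ij}>0$ only if $j<i$, and for all $i>1$ there exists $j<i$ with $A_{ij}>0$. Consider solutions on $\mathbb{R}_+$ of $$\frac{dx_i}{dt}=v_i,\qquad\frac{dv_i}{dt}=\alpha\sum_{j\ne i}Q_t(i,j)(v_j-v_i)$$ with either (CS) $Q_t(i,j)=A_{ij}\psi(\|x_j(t)-x_i(t)\|_2)$, or (MT) $Q_t(i,j)=\dfrac{A_{ij}\psi(\|x_i(t)-x_j(t)\|_2)}{a_i+\sum_{k\ne i}A_{ik}\psi(\|x_i(t)-x_k(t)\|_2)}$, where $a\in\mathbb{R}_+^N$ satisfies $a_i>0$ whenever $A_{ij}=0$ for all $j\ne i$. Then the solution flocks provided $$V(0)<C_{HL}\sup_{r\ge X(0)}(r-X(0))\psi(r)\quad\text{for (CS)},$$ $$V(0)<M_{HL}\sup_{r\ge X(0)}(r-X(0))\frac{(\bar a+A_* )\psi(r)}{\bar a+A_*\psi(r)}\quad\text{for (MT)},$$ where $A_*=\inf_{i>1}\sum_{j\ne i}A_{ij}$, $B_*=\inf_{i>1}\sum_{j\ne i}B_{ij}$ with $B_{ij}=\dfrac{A_{ij}}{a_i+\sum_{k\ne i}A_{ik}}$, $C_{HL}=\alpha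 A_*/H$, $M_{HL}=\alpha B_*/H$, and $\bar a=\sup_{i>1}a_i$. In particular, for (MT), if $\bar a=0$ the flocking is unconditional (occurs for every initial condition).
   Context: The interaction graph has vertices $\{1,\dots,N\}$ and an edge $i\to j$ iff $i\ne j$ and $A_{ij}>0$; the length of a path is its number of edges. For $i>1$, $h_i$ is the maximal length of a path from $i$ to $1$, and $H=\sup_{i>1}h_i$. $X(t)=\sup_{i,j}\|x_i(t)-x_j(t)\|_2$, $V(t)=\sup_{i,j}\|v_i(t)-v_j(t)\|_2$; flocking means $\sup_{t\ge0}X(t)<+\infty$ and $V(t)\to0$ as $t\to+\infty$. *)

(* Stdlib reals + Coquelicot. Vertices are the naturals 1..N (vertex 1 is the leader);
   spatial components are indexed 0..d-1. *)
From Stdlib Require Export Reals List Lia Lra.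
From Coquelicot Require Export Coquelicot.
Import ListNotations.
Open Scope R_scope.

Definition Rsum (l : list nat) (f : nat -> R) : R :=
  fold_right (fun j acc => f j + acc) 0 l.

Definition sum_ne (N i : nat) (f : nat -> R) : R :=
  Rsum (filter (fun j => negb (Nat.eqb j i)) (seq 1 N)) f.

Definition norm2 (d : nat) (u : nat -> R) : R :=
  sqrt (Rsum (seq 0 d) (fun k => (u k) ^ 2)).

(* y i k t : k-th component of the position (or velocity) of agent i at time t *)
Definition state := nat -> nat -> R -> R.

Definition dist (d : nat) (y : state) (i j : nat) (t : R) : R :=
  norm2 d (fun k => y i k t - y j k t).

(* sup_{i,j in 1..N} || y_i(t) - y_j(t) ||_2  (all terms are >= 0, so starting the
   max-fold at 0 gives exactly the maximum) *)
Definition diam (N d : nat) (y : state) (t : R) : R :=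
  fold_right Rmax 0
    (flat_map (fun i => map (fun j => dist d y i j t) (seq 1 N)) (seq 1 N)).

(* min / max of f over i in 2..N (requires N >= 2 to be meaningful) *)
Definition min_gt1 (N : nat) (f : nat -> R) : R :=
  fold_right Rmin (f 2%nat) (map f (seq 2 (N - 1))).
Definition max_gt1 (N : nat) (f : nat -> R) : R :=
  fold_right Rmax (f 2%nat) (map f (seq 2 (N - 1))).

Definition rowsum (N : nat) (A : nat -> nat -> R) (i : nat) : R := sum_ne N i (A i).

Definition Astar (N : nat) (A : nat -> nat -> R) : R := min_gt1 N (rowsum N A).

Definition Bmat (N : nat) (A : nat -> nat -> R) (a : nat -> R) (i j : nat) : R :=
  A i j / (a i + rowsum N A i).

Definition Bstar (N : nat) (A : nat -> nat -> R) (a : nat -> R) : R :=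
  min_gt1 N (fun i => sum_ne N i (Bmat N A a i)).

Definition abar (N : nat) (a : nat -> R) : R := max_gt1 N a.

Fixpoint edges_ok (A : nat -> nat -> R) (p : list nat) : Prop :=
  match p with
  | u :: ((w :: _) as q) => (u <> w /\ 0 < A u w) /\ edges_ok A q
  | _ => True
  end.

Definition has_path (N : nat) (A : nat -> nat -> R) (i k : nat) : Prop :=
  exists p : list nat,
    List.length p = S k /\ List.hd 0%nat p = i /\ List.last p 0%nat = 1%nat /\
    List.Forall (fun u => (1 <= u <= N)%nat) p /\ edges_ok A p.

Definition is_height (N : nat) (A : nat -> nat -> R) (H : nat) : Prop :=
  (exists i, (1 < i <= N)%nat /\ has_path N A i H) /\
  (forall i k, (1 < i <= N)%nat -> has_path N A i k -> (k <= H)%nat).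

Definition hier_leader (N : nat) (A : nat -> nat -> R) : Prop :=
  (forall i j, (1 <= i <= N)%nat -> (1 <= j <= N)%nat -> 0 < A i j -> (j < i)%nat) /\
  (forall i, (1 < i <= N)%nat -> exists j, (1 <= j < i)%nat /\ 0 < A i j).

Definition Q_CS (d : nat) (A : nat -> nat -> R) (psi : R -> R) (x : state)
  (t : R) (i j : nat) : R :=
  A i j * psi (dist d x j i t).

Definition Q_MT (N d : nat) (A : nat -> nat -> R) (a : nat -> R) (psi : R -> R)
  (x : state) (t : R) (i j : nat) : R :=
  A i j * psi (dist d x i j t) /
  (a i + sum_ne N i (fun k => A i k * psi (dist d x i k t))).

(* (x, v) solves dx_i/dt = v_i, dv_i/dt = alpha sum_{j<>i} Q_t(i,j)(v_j - v_i) on R_+: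
   continuous on [0, +oo) (right-continuous at 0) and differentiable on (0, +oo). *)
Definition is_solution (N d : nat) (alpha : R) (Q : R -> nat -> nat -> R)
  (x v : state) : Prop :=
  forall i k, (1 <= i <= N)%nat -> (k < d)%nat ->
    filterlim (x i k) (at_right 0) (locally (x i k 0)) /\
    filterlim (v i k) (at_right 0) (locally (v i k 0)) /\
    (forall t, 0 < t ->
       is_derive (x i k) t (v i k t) /\
       is_derive (v i k) t
         (alpha * sum_ne N i (fun j => Q t i j * (v j k t - v i k t)))).

Definition flocks (N d : nat) (x v : state) : Prop :=
  (exists M, forall t, 0 <= t -> diam N d x t <= M) /\
  is_lim (fun t => diam N d v t) p_infty 0.

(* Fix [r] and suppose that, while the diameter [X] stays below [r], every follower
   feels a total influence at least [c].  Project the velocity of a follower relative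
   to the leader onto a fixed direction: a follower all of whose paths to the leader
   have length [<= h] is pulled towards neighbours with the same property for [h - 1],
   so by induction and the comparison principle the projection is dominated by [V(0)]
   times the Erlang tail [g_h(t) = e^(-ct) sum_(k<h) (ct)^k/k!], which solves the
   corresponding linear cascade.  Hence [V(t) <= V(0) g_H(t) = O(1/t)], and
   integrating, [X(t) <= X(0) + V(0) H / c].  For Cucker-Smale one can take
   [c = alpha A_* psi(r)], for Motsch-Tadmor [c = alpha B_* (abar + A_* ) psi(r) /
   (abar + A_* psi(r))]; the smallness assumption provides an [r] with
   [X(0) + V(0) H / c < r], and a continuity argument then keeps [X <= r] forever. *)

From Stdlib Require Import Reals Lra Lia List Arith Classical.
From Coquelicot Require Import Coquelicot.
Import ListNotations.
Open Scope R_scope.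

(** * Finite sums, maxima and the Euclidean norm *)

Lemma Rsum_cons (l : list nat) a f : Rsum (a :: l) f = f a + Rsum l f.
Proof. reflexivity. Qed.

Lemma Rsum_ext (l : list nat) f g : (forall x, In x l -> f x = g x) -> Rsum l f = Rsum l g.
Proof.
  induction l as [|a l' IH]; intros Hfg; simpl; auto.
  f_equal; [apply Hfg | apply IH; intros; apply Hfg]; simpl; auto.
Qed.

Lemma Rsum_le (l : list nat) f g : (forall x, In x l -> f x <= g x) -> Rsum l f <= Rsum l g.
Proof.
  induction l as [|a l' IH]; intros Hfg; simpl; [lra|].
  apply Rplus_le_compat; [apply Hfg | apply IH; intros; apply Hfg]; simpl; auto.
Qed.

Lemma Rsum_eq0 (l : list nat) f : (forall x, In x l -> f x = 0) -> Rsum l f = 0.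
Proof.
  induction l as [|a l' IH]; intros Hf; simpl; auto.
  rewrite Hf, IH; [lra | intros; apply Hf | ]; simpl; auto.
Qed.

Lemma Rsum_nonneg (l : list nat) f : (forall x, In x l -> 0 <= f x) -> 0 <= Rsum l f.
Proof.
  intros Hf; rewrite <- (Rsum_eq0 l (fun _ => 0)) by auto.
  now apply Rsum_le.
Qed.

Lemma Rsum_pos (l : list nat) f x :
  (forall y, In y l -> 0 <= f y) -> In x l -> 0 < f x -> 0 < Rsum l f.
Proof.
  induction l as [|a l' IH]; simpl; intros Hf Hx Hfx; [contradiction|].
  assert (0 <= f a) by auto; assert (0 <= Rsum l' f) by (apply Rsum_nonneg; auto).
  destruct Hx as [->|Hx]; [lra|]. assert (0 < Rsum l' f) by auto. lra.
Qed.

Lemma Rsum_plus (l : list nat) f g : Rsum l (fun x => f x + g x) = Rsum l f + Rsum l g.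
Proof. induction l as [|a l' IH]; simpl; [lra | rewrite IH; lra]. Qed.

Lemma Rsum_minus (l : list nat) f g : Rsum l (fun x => f x - g x) = Rsum l f - Rsum l g.
Proof. induction l as [|a l' IH]; simpl; [lra | rewrite IH; lra]. Qed.

Lemma Rsum_scal_l (l : list nat) c f : Rsum l (fun x => c * f x) = c * Rsum l f.
Proof. induction l as [|a l' IH]; simpl; [lra | rewrite IH; lra]. Qed.

Lemma Rsum_scal_r (l : list nat) c f : Rsum l (fun x => f x * c) = Rsum l f * c.
Proof. induction l as [|a l' IH]; simpl; [lra | rewrite IH; lra]. Qed.

Lemma Rsum_sqr_eq0 (l : list nat) f :
  Rsum l (fun k => f k * f k) = 0 -> forall k, In k l -> f k = 0.
Proof.
  induction l as [|a l' IH]; intros Hs k Hk; [contradiction|].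
  rewrite Rsum_cons in Hs.
  assert (0 <= Rsum l' (fun k => f k * f k)) by (apply Rsum_nonneg; intros; apply Rle_0_sqr).
  assert (0 <= f a * f a) by apply Rle_0_sqr.
  destruct Hk as [<-|Hk]; [apply Rsqr_0_uniq; unfold Rsqr; lra | apply IH; auto; lra].
Qed.

Lemma Rsum_comm (l1 l2 : list nat) (F : nat -> nat -> R) :
  Rsum l1 (fun k => Rsum l2 (F k)) = Rsum l2 (fun j => Rsum l1 (fun k => F k j)).
Proof.
  induction l1 as [|a l1 IH]; simpl.
  - symmetry; now apply Rsum_eq0.
  - now rewrite IH, <- Rsum_plus.
Qed.

Lemma Rsum_weighted_le l (w y : nat -> R) y0 K :
  (forall j, In j l -> 0 <= w j) -> (forall j, In j l -> 0 < w j -> y j <= K) ->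
  Rsum l (fun j => w j * (y j - y0)) <= Rsum l w * (K - y0).
Proof.
  intros Hw Hy. rewrite <- Rsum_scal_r. apply Rsum_le. intros j Hj.
  destruct (Hw j Hj) as [Hpos|<-]; [|lra].
  specialize (Hy j Hj Hpos). nra.
Qed.

Lemma in_sum_ne_range N i j :
  In j (filter (fun j => negb (Nat.eqb j i)) (seq 1 N)) <-> (1 <= j <= N)%nat /\ j <> i.
Proof.
  rewrite filter_In, in_seq, Bool.negb_true_iff, Nat.eqb_neq. lia.
Qed.

Lemma sum_ne_div N i (f : nat -> R) D : sum_ne N i (fun j => f j / D) = sum_ne N i f / D.
Proof. apply Rsum_scal_r. Qed.

Section FoldMax.
Variable x0 : R.

Lemma fold_max_ge l z : In z l -> z <= fold_right Rmax x0 l.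
Proof.
  induction l as [|a l IH]; simpl; intros Hz; [contradiction|].
  destruct Hz as [->|Hz]; [apply Rmax_l | eapply Rle_trans; [apply IH; auto | apply Rmax_r]].
Qed.

Lemma fold_max_ge_init l : x0 <= fold_right Rmax x0 l.
Proof. induction l as [|a l IH]; simpl; [lra | eapply Rle_trans; [apply IH | apply Rmax_r]]. Qed.

Lemma fold_max_lub l b : x0 <= b -> (forall z, In z l -> z <= b) -> fold_right Rmax x0 l <= b.
Proof. induction l as [|a l IH]; simpl; intros H0 Hl; auto. apply Rmax_lub; auto. Qed.

Lemma fold_max_attained l : fold_right Rmax x0 l = x0 \/ In (fold_right Rmax x0 l) l.
Proof.
  induction l as [|a l IH]; simpl; auto.
  destruct (Rle_dec a (fold_right Rmax x0 l)).
  - rewrite Rmax_right by lra. destruct IH; auto.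
  - rewrite Rmax_left by lra. auto.
Qed.

Lemma fold_min_le l z : In z l -> fold_right Rmin x0 l <= z.
Proof.
  induction l as [|a l IH]; simpl; intros Hz; [contradiction|].
  destruct Hz as [->|Hz]; [apply Rmin_l | eapply Rle_trans; [apply Rmin_r | apply IH; auto]].
Qed.

Lemma fold_min_le_init l : fold_right Rmin x0 l <= x0.
Proof. induction l as [|a l IH]; simpl; [lra | eapply Rle_trans; [apply Rmin_r | apply IH]]. Qed.

Lemma fold_min_gt l b : b < x0 -> (forall z, In z l -> b < z) -> b < fold_right Rmin x0 l.
Proof. induction l as [|a l IH]; simpl; intros H0 Hl; auto. apply Rmin_glb_lt; auto. Qed.

End FoldMax.

Lemma min_gt1_le N f i : (2 <= i <= N)%nat -> min_gt1 N f <= f i.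
Proof.
  intros Hi; unfold min_gt1. destruct (Nat.eq_dec i 2) as [->|Hne]; [apply fold_min_le_init|].
  apply fold_min_le, in_map, in_seq. lia.
Qed.

Lemma min_gt1_pos N f :
  (2 <= N)%nat -> (forall i, (2 <= i <= N)%nat -> 0 < f i) -> 0 < min_gt1 N f.
Proof.
  intros HN Hf; unfold min_gt1. apply fold_min_gt; [apply Hf; lia|].
  intros z Hz; apply in_map_iff in Hz as [i [<- Hi]]; apply in_seq in Hi. apply Hf; lia.
Qed.

Lemma max_gt1_ge N f i : (2 <= i <= N)%nat -> f i <= max_gt1 N f.
Proof.
  intros Hi; unfold max_gt1. destruct (Nat.eq_dec i 2) as [->|Hne]; [apply fold_max_ge_init|].
  apply fold_max_ge, in_map, in_seq. lia.
Qed.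

Definition dot (d : nat) (a b : nat -> R) : R := Rsum (seq 0 d) (fun k => a k * b k).

Lemma norm2_nonneg d a : 0 <= norm2 d a.
Proof. apply sqrt_pos. Qed.

Lemma norm2_sqr d a : norm2 d a * norm2 d a = dot d a a.
Proof.
  unfold norm2, dot. rewrite sqrt_sqrt by (apply Rsum_nonneg; intros; apply pow2_ge_0).
  apply Rsum_ext; intros; ring.
Qed.

Lemma Cauchy_Schwarz d a b : dot d a b <= norm2 d a * norm2 d b.
Proof.
  set (na := norm2 d a); set (nb := norm2 d b).
  assert (Ha := norm2_nonneg d a); assert (Hb := norm2_nonneg d b); fold na nb in Ha, Hb.
  assert (Ea := norm2_sqr d a); assert (Eb := norm2_sqr d b); fold na nb in Ea, Eb.
  assert (Hsq : 0 <= dot d (fun k => nb * a k - na * b k) (fun k => nb * a k - na * b k))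
    by (apply Rsum_nonneg; intros; apply Rle_0_sqr).
  replace (dot d _ _)
    with (nb ^ 2 * dot d a a - 2 * na * nb * dot d a b + na ^ 2 * dot d b b) in Hsq
    by (unfold dot; rewrite <- !Rsum_scal_l, <- Rsum_minus, <- Rsum_plus;
        apply Rsum_ext; intros; ring).
  destruct (Rlt_dec 0 (na * nb)) as [Hp|Hz].
  - apply Rmult_le_reg_l with (na * nb); nra.
  - assert (Hab : dot d a b = 0); [|nra].
    assert (Hz' : dot d a a = 0 \/ dot d b b = 0)
      by (destruct (Req_dec na 0); [left | right]; nra).
    apply Rsum_eq0. intros k Hk.
    destruct Hz' as [Hz'|Hz'];
      [rewrite (Rsum_sqr_eq0 _ a Hz') | rewrite (Rsum_sqr_eq0 _ b Hz')]; auto; ring.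
Qed.

Lemma le_of_sqr_le_mul n b : 0 <= n -> 0 <= b -> n * n <= n * b -> n <= b.
Proof. intros Hn Hb Hnb. destruct (Req_dec n 0); [lra | nra]. Qed.

(** * Limits, comparison principle and continuous induction *)

Section FilterLimits.
Context {F : (R -> Prop) -> Prop} {FF : Filter F}.

Lemma lim_const (a : R) : filterlim (fun _ => a) F (locally a).
Proof. apply filterlim_const. Qed.

Lemma lim_plus (f g : R -> R) (a b : R) :
  filterlim f F (locally a) -> filterlim g F (locally b) ->
  filterlim (fun t => f t + g t) F (locally (a + b)).
Proof. intros Hf Hg. exact (filterlim_comp_2 f g Rplus Hf Hg (filterlim_plus a b)). Qed.

Lemma lim_mult (f g : R -> R) (a b : R) :
  filterlim f F (locally a) -> filterlim g F (locally b) ->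
  filterlim (fun t => f t * g t) F (locally (a * b)).
Proof. intros Hf Hg. exact (filterlim_comp_2 f g Rmult Hf Hg (filterlim_mult a b)). Qed.

Lemma lim_minus (f g : R -> R) (a b : R) :
  filterlim f F (locally a) -> filterlim g F (locally b) ->
  filterlim (fun t => f t - g t) F (locally (a - b)).
Proof.
  intros Hf Hg. apply lim_plus; auto.
  eapply filterlim_comp; [exact Hg | exact (filterlim_opp b)].
Qed.

Lemma lim_Rsum (l : list nat) (G : nat -> R -> R) (b : nat -> R) :
  (forall k, In k l -> filterlim (G k) F (locally (b k))) ->
  filterlim (fun t => Rsum l (fun k => G k t)) F (locally (Rsum l b)).
Proof.
  induction l as [|a l IH]; intros HG; [apply lim_const|].
  apply lim_plus; [apply HG | apply IH; intros; apply HG]; simpl; auto.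
Qed.

Lemma lim_max (f g : R -> R) (a b : R) :
  filterlim f F (locally a) -> filterlim g F (locally b) ->
  filterlim (fun t => Rmax (f t) (g t)) F (locally (Rmax a b)).
Proof.
  intros Hf Hg.
  assert (Hmax : forall u w, Rmax u w = (u + w + Rabs (u - w)) / 2)
    by (intros u w; unfold Rmax; destruct Rle_dec; [rewrite Rabs_left1 | rewrite Rabs_right]; lra).
  rewrite Hmax. apply (filterlim_ext (fun t => (f t + g t + Rabs (f t - g t)) / 2)).
  { intros; now rewrite Hmax. }
  apply lim_mult; [|apply lim_const]. apply lim_plus; [now apply lim_plus|].
  eapply filterlim_comp; [exact (lim_minus _ _ _ _ Hf Hg) | apply continuous_Rabs].
Qed.

Lemma lim_fold_max {T : Type} (l : list T) (G : T -> R -> R) (b : T -> R) x0 :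
  (forall k, In k l -> filterlim (G k) F (locally (b k))) ->
  filterlim (fun t => fold_right Rmax x0 (map (fun k => G k t) l)) F
    (locally (fold_right Rmax x0 (map b l))).
Proof.
  induction l as [|a l IH]; intros HG; [apply lim_const|].
  apply lim_max; [apply HG | apply IH; intros; apply HG]; simpl; auto.
Qed.

End FilterLimits.

Lemma right_cont_of_cont (f : R -> R) t :
  filterlim f (locally t) (locally (f t)) -> filterlim f (at_right t) (locally (f t)).
Proof. apply filterlim_filter_le_1. intros P HP. now apply filter_imp with (2 := HP). Qed.

Lemma is_derive_cont (f : R -> R) (t l : R) :
  is_derive f t l -> filterlim f (locally t) (locally (f t)).
Proof. intros Hd. apply (ex_derive_continuous f). now exists l. Qed.

Lemma is_derive_Rsum (l : list nat) (G : nat -> R -> R) (dG : nat -> R) (t : R) :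
  (forall k, In k l -> is_derive (G k) t (dG k)) ->
  is_derive (fun s => Rsum l (fun k => G k s)) t (Rsum l dG).
Proof.
  induction l as [|a l IH]; intros HG; [apply (is_derive_const 0 t)|].
  apply (is_derive_plus (G a) (fun s => Rsum l (fun k => G k s)));
    [apply HG | apply IH; intros; apply HG]; simpl; auto.
Qed.

Lemma cont_eps (f : R -> R) t : filterlim f (locally t) (locally (f t)) ->
  forall eps, 0 < eps -> exists delta, 0 < delta /\
    forall y, Rabs (y - t) < delta -> Rabs (f y - f t) < eps.
Proof.
  intros Hf eps Heps.
  destruct (proj1 (filterlim_locally f (f t)) Hf (mkposreal eps Heps)) as [delta Hd].
  exists delta; split; [apply cond_pos | intros y Hy; apply (Hd y Hy)].
Qed.

Lemma exists_right_near a b delta : a < b -> 0 < delta -> exists s, a < s < b /\ s < a + delta.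
Proof.
  intros Hab Hd. exists (a + Rmin delta (b - a) / 2).
  assert (0 < Rmin delta (b - a)) by (apply Rmin_glb_lt; lra).
  assert (Rmin delta (b - a) <= delta) by apply Rmin_l.
  assert (Rmin delta (b - a) <= b - a) by apply Rmin_r.
  lra.
Qed.

Lemma exists_left_near a b delta : a < b -> 0 < delta -> exists s, a < s < b /\ b - delta < s.
Proof.
  intros Hab Hd. destruct (exists_right_near a b delta Hab Hd) as [s Hs].
  exists (a + b - s). lra.
Qed.

Section ContinuousOnNonneg.
Variable f : R -> R.
Hypothesis f_right_cont0 : filterlim f (at_right 0) (locally (f 0)).
Hypothesis f_cont : forall t, 0 < t -> filterlim f (locally t) (locally (f t)).

Lemma right_cont_eps t0 : 0 <= t0 ->
  forall eps, 0 < eps -> exists delta, 0 < delta /\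
    forall y, t0 <= y < t0 + delta -> Rabs (f y - f t0) < eps.
Proof.
  intros Ht0 eps Heps. destruct (Req_dec t0 0) as [->|Hne].
  - destruct (proj1 (filterlim_locally f (f 0)) f_right_cont0 (mkposreal eps Heps)) as [delta Hd].
    exists delta; split; [apply cond_pos|]. intros y Hy.
    destruct (Req_dec y 0) as [->|Hy0]; [rewrite Rminus_diag, Rabs_R0; lra|].
    apply (Hd y); [|lra]. change (Rabs (y - 0) < delta). rewrite Rminus_0_r, Rabs_right; lra.
  - destruct (cont_eps f t0 (f_cont t0 ltac:(lra)) eps Heps) as [delta [Hd1 Hd2]].
    exists delta; split; auto. intros y Hy. apply Hd2. rewrite Rabs_right; lra.
Qed.

Lemma le_of_left_approx t0 b : 0 < t0 ->
  (forall delta, 0 < delta -> exists s, t0 - delta < s <= t0 /\ f s <= b) -> f t0 <= b.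
Proof.
  intros Ht0 Happrox. apply Rnot_lt_le. intros Hlt.
  destruct (cont_eps f t0 (f_cont t0 Ht0) (f t0 - b) ltac:(lra)) as [delta [Hd1 Hd2]].
  destruct (Happrox delta Hd1) as [s [Hs Hfs]].
  assert (Hclose : Rabs (s - t0) < delta) by (rewrite Rabs_left1; lra).
  specialize (Hd2 s Hclose). apply Rabs_lt_between in Hd2. lra.
Qed.

Lemma bootstrap rho r : rho < r -> f 0 <= rho ->
  (forall T, 0 <= T -> (forall t, 0 <= t <= T -> f t <= r) ->
     forall t, 0 <= t <= T -> f t <= rho) ->
  forall t, 0 <= t -> f t <= r.
Proof.
  intros Hrho Hf0 Hapriori t1 Ht1. apply Rnot_lt_le. intros Hfail.
  set (E := fun s => 0 <= s <= t1 /\ forall u, 0 <= u <= s -> f u <= r).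
  assert (HE0 : E 0) by (split; [lra | intros u Hu; replace u with 0 by lra; lra]).
  destruct (completeness E) as [t0 [Hub Hlub]]; [exists t1; intros s Hs; apply Hs | now exists 0 |].
  assert (Ht0 : 0 <= t0 <= t1) by (split; [apply Hub, HE0 | apply Hlub; intros s Hs; apply Hs]).
  assert (Hbefore : forall u, 0 <= u < t0 -> f u <= rho).
  { intros u Hu. destruct (classic (exists s, E s /\ u <= s)) as [[s [[Hs HEs] Hus]]|Hno].
    - apply (Hapriori s); auto; lra.
    - assert (t0 <= u); [|lra]. apply Hlub. intros s Hs.
      apply Rnot_lt_le. intros Hlt. apply Hno. exists s; split; auto; lra. }
  assert (Hat : f t0 <= rho).
  { destruct (Req_dec t0 0) as [->|Hne]; auto. apply le_of_left_approx; [lra|].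
    intros delta Hdelta. destruct (exists_left_near 0 t0 delta) as [s Hs]; [lra | auto |].
    exists s. split; [lra | apply Hbefore; lra]. }
  assert (Ht0t1 : t0 < t1) by (destruct (Req_dec t0 t1) as [<-|]; lra).
  destruct (right_cont_eps t0 (proj1 Ht0) (r - rho) ltac:(lra)) as [delta [Hd1 Hd2]].
  destruct (exists_right_near t0 t1 delta Ht0t1 Hd1) as [s Hs].
  assert (s <= t0); [|lra].
  apply Hub. split; [lra|]. intros u Hu.
  destruct (Rlt_le_dec u t0); [assert (f u <= rho) by (apply Hbefore; lra); lra|].
  assert (Hu' := Hd2 u ltac:(lra)). apply Rabs_lt_between in Hu'. lra.
Qed.

End ContinuousOnNonneg.

Lemma derive_nonpos_le (f df : R -> R) s t : s <= t ->
  (forall u, s <= u <= t -> is_derive f u (df u)) -> (forall u, s <= u <= t -> df u <= 0) ->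
  f t <= f s.
Proof.
  intros Hst Hd Hdf. destruct (MVT_gen f s t df) as [xi [Hxi Heq]].
  - intros u Hu. apply Hd. rewrite Rmin_left, Rmax_right in Hu by lra. lra.
  - intros u Hu. rewrite Rmin_left, Rmax_right in Hu by lra.
    apply continuity_pt_filterlim. apply (is_derive_cont f u (df u)). apply Hd; lra.
  - rewrite Rmin_left, Rmax_right in Hxi by lra. specialize (Hdf xi Hxi). nra.
Qed.

Lemma comparison_principle (f df : R -> R) T :
  filterlim f (at_right 0) (locally (f 0)) ->
  (forall t, 0 < t -> is_derive f t (df t)) ->
  f 0 <= 0 -> (forall t, 0 < t <= T -> 0 < f t -> df t <= 0) ->
  forall t, 0 <= t <= T -> f t <= 0.
Proof.
  intros Hr Hd Hf0 Hdf t1 Ht1. apply Rnot_lt_le. intros Hpos.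
  assert (Hcont : forall t, 0 < t -> filterlim f (locally t) (locally (f t)))
    by (intros t Ht; apply (is_derive_cont f t (df t)), Hd, Ht).
  set (E := fun s => 0 <= s <= t1 /\ f s <= 0).
  assert (HE0 : E 0) by (split; [lra | auto]).
  destruct (completeness E) as [t0 [Hub Hlub]]; [exists t1; intros s Hs; apply Hs | now exists 0 |].
  assert (Ht0 : 0 <= t0 <= t1) by (split; [apply Hub, HE0 | apply Hlub; intros s Hs; apply Hs]).
  assert (Hafter : forall s, t0 < s <= t1 -> 0 < f s).
  { intros s Hs. apply Rnot_le_lt. intros Hle.
    assert (s <= t0) by (apply Hub; split; [lra | auto]). lra. }
  assert (Hdecr : forall s, t0 < s <= t1 -> f t1 <= f s).
  { intros s Hs. apply (derive_nonpos_le f df); [lra | intros u Hu; apply Hd; lra |].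
    intros u Hu. apply Hdf; [lra | apply Hafter; lra]. }
  assert (Hat : f t0 <= 0).
  { destruct (Req_dec t0 0) as [->|Hne]; auto. apply (le_of_left_approx f Hcont); [lra|].
    intros delta Hdelta. apply NNPP. intros Hno.
    assert (t0 <= t0 - delta); [|lra]. apply Hlub. intros s [Hs Hfs].
    apply Rnot_lt_le. intros Hlt. apply Hno.
    exists s. split; [split|]; auto; apply Hub; split; auto. }
  assert (Ht0t1 : t0 < t1) by (destruct (Req_dec t0 t1) as [<-|]; lra).
  destruct (right_cont_eps f Hr Hcont t0 (proj1 Ht0) (f t1 - f t0) ltac:(lra)) as [delta [Hd1 Hd2]].
  destruct (exists_right_near t0 t1 delta Ht0t1 Hd1) as [s Hs].
  assert (Hclose := Hd2 s ltac:(lra)). apply Rabs_lt_between in Hclose.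
  assert (f t1 <= f s) by (apply Hdecr; lra). lra.
Qed.

Lemma derive_nonpos_le_init (f df : R -> R) T :
  filterlim f (at_right 0) (locally (f 0)) ->
  (forall t, 0 < t -> is_derive f t (df t)) -> (forall t, 0 < t <= T -> df t <= 0) ->
  forall t, 0 <= t <= T -> f t <= f 0.
Proof.
  intros Hr Hd Hdf t Ht.
  enough (f t - f 0 <= 0) by lra.
  apply (comparison_principle (fun s => f s - f 0) df T); auto; [| |lra].
  - apply lim_minus; [exact Hr | apply lim_const].
  - intros s Hs. replace (df s) with (df s - 0) by ring.
    apply (is_derive_minus f (fun _ => f 0) s (df s) 0); [auto | apply (is_derive_const (f 0) s)].
Qed.

Lemma derive_nonneg_ge_init (G g : R -> R) T :
  filterlim G (at_right 0) (locally (G 0)) ->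
  (forall t, 0 < t -> is_derive G t (g t)) -> (forall t, 0 < t <= T -> 0 <= g t) ->
  forall t, 0 <= t <= T -> G 0 <= G t.
Proof.
  intros HG Hd Hg t Ht.
  enough (- G t <= - G 0) by lra.
  apply (derive_nonpos_le_init (fun s => - G s) (fun s => - g s) T); auto.
  - eapply filterlim_comp; [exact HG | apply (filterlim_opp (G 0))].
  - intros s Hs. apply (is_derive_opp G s (g s)), Hd, Hs.
  - intros s Hs. specialize (Hg s Hs). lra.
Qed.

(* Project onto the final displacement [y t] and compare with the primitive [G]. *)
Lemma norm2_le_of_derive d (y dy : nat -> R -> R) (G g : R -> R) T :
  (forall k, (k < d)%nat -> filterlim (y k) (at_right 0) (locally (y k 0))) ->
  (forall k t, (k < d)%nat -> 0 < t -> is_derive (y k) t (dy k t)) ->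
  filterlim G (at_right 0) (locally (G 0)) ->
  (forall t, 0 < t -> is_derive G t (g t)) ->
  (forall t, 0 < t <= T -> norm2 d (fun k => dy k t) <= g t) ->
  forall t, 0 <= t <= T -> norm2 d (fun k => y k t) <= norm2 d (fun k => y k 0) + G t - G 0.
Proof.
  intros Hy Hdy HG HdG Hg t1 Ht1.
  set (phi := fun k => y k t1). set (n := norm2 d phi).
  assert (Hn : 0 <= n) by apply norm2_nonneg.
  set (f := fun t => dot d phi (fun k => y k t) - n * G t).
  assert (Hf : f t1 <= f 0).
  { apply (derive_nonpos_le_init f (fun t => dot d phi (fun k => dy k t) - n * g t) T); auto.
    - apply lim_minus; [|apply lim_mult; [apply lim_const | exact HG]].
      apply (lim_Rsum _ (fun k t => phi k * y k t)). intros k Hk. apply in_seq in Hk.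
      apply lim_mult; [apply lim_const | apply Hy; lia].
    - intros t Ht. apply (is_derive_minus (fun t => dot d phi (fun k => y k t)) (fun t => n * G t));
        [|apply is_derive_scal, HdG, Ht].
      apply (is_derive_Rsum _ (fun k t => phi k * y k t)). intros k Hk. apply in_seq in Hk.
      apply is_derive_scal, Hdy; auto; lia.
    - intros t Ht. assert (Hcs := Cauchy_Schwarz d phi (fun k => dy k t)).
      assert (n * norm2 d (fun k => dy k t) <= n * g t) by (apply Rmult_le_compat_l; auto).
      fold n in Hcs. lra. }
  assert (HGmono : G 0 <= G t1).
  { apply (derive_nonneg_ge_init G g T); auto. intros t Ht.
    eapply Rle_trans; [apply norm2_nonneg | apply Hg, Ht]. }
  unfold f in Hf. rewrite <- norm2_sqr in Hf.
  assert (Hcs := Cauchy_Schwarz d phi (fun k => y k 0)). fold n in Hcs.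
  apply le_of_sqr_le_mul; auto.
  - assert (0 <= norm2 d (fun k => y k 0)) by apply norm2_nonneg. lra.
  - change (norm2 d (fun k => y k t1)) with n in Hf |- *. lra.
Qed.

(** * Erlang tails *)

Fixpoint exp_trunc (h : nat) (x : R) : R :=
  match h with O => 0 | S h' => exp_trunc h' x + x ^ h' / INR (fact h') end.

(* [erlang_tail c h t = P(Poisson(c t) < h)], the tail at [t] of the Erlang law with
   shape [h] and rate [c]; it solves [g_h' = - c (g_h - g_(h-1))], the comparison
   system along a path of length [h] towards the leader. *)
Definition erlang_tail (c : R) (h : nat) (t : R) : R := exp (- (c * t)) * exp_trunc h (c * t).

Fixpoint erlang_tail_int (c : R) (h : nat) (t : R) : R :=
  match h with O => 0 | S h' => erlang_tail_int c h' t + (1 - erlang_tail c (S h') t) / c end.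

Lemma exp_trunc_term_nonneg h x : 0 <= x -> 0 <= x ^ h / INR (fact h).
Proof.
  intros Hx. apply Rdiv_le_0_compat; [now apply pow_le | apply lt_0_INR, lt_O_fact].
Qed.

Lemma exp_trunc_nonneg h x : 0 <= x -> 0 <= exp_trunc h x.
Proof.
  intros Hx; induction h as [|h IH]; simpl; [lra|].
  assert (Ht := exp_trunc_term_nonneg h x Hx). lra.
Qed.

Lemma exp_trunc_le_S h x : 0 <= x -> exp_trunc h x <= exp_trunc (S h) x.
Proof. intros Hx; simpl. assert (Ht := exp_trunc_term_nonneg h x Hx). lra. Qed.

Lemma exp_trunc_S_0 h : exp_trunc (S h) 0 = 1.
Proof.
  induction h as [|h IH]; [simpl; field|].
  change (exp_trunc (S h) 0 + 0 ^ S h / INR (fact (S h)) = 1).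
  rewrite IH, pow_i by lia. unfold Rdiv. ring.
Qed.

Lemma is_derive_exp_trunc h (x : R) : is_derive (exp_trunc (S h)) x (exp_trunc h x).
Proof.
  induction h as [|h IH].
  - apply (is_derive_ext (fun _ => 1)); [intros; simpl; field | apply (is_derive_const 1 x)].
  - assert (Hpow : is_derive (fun t => t ^ S h / INR (fact (S h))) x (x ^ h / INR (fact h))).
    { apply (is_derive_ext (fun t => / INR (fact (S h)) * t ^ S h)); [intros t; apply Rmult_comm|].
      replace (x ^ h / INR (fact h))
        with (/ INR (fact (S h)) * (INR (S h) * 1 * x ^ Nat.pred (S h))).
      - apply is_derive_scal, (is_derive_pow (fun t => t) (S h) x 1), (is_derive_id x).
      - change (fact (S h)) with (S h * fact h)%nat. rewrite mult_INR. simpl Nat.pred.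
        field. split; [apply INR_fact_neq_0 | apply not_0_INR; lia]. }
    exact (is_derive_plus (exp_trunc (S h)) _ x _ _ IH Hpow).
Qed.

Lemma exp_trunc_le_exp h y : 0 <= y -> exp_trunc h y <= exp y.
Proof.
  revert y; induction h as [|h IH]; intros y Hy; [simpl; left; apply exp_pos|].
  set (g := fun t => exp_trunc (S h) t - exp t).
  assert (Hg : forall t, is_derive g t (exp_trunc h t - exp t))
    by (intros t; apply (is_derive_minus (exp_trunc (S h)) exp);
        [apply is_derive_exp_trunc | apply is_derive_exp]).
  enough (g y <= g 0) by (unfold g in *; rewrite exp_trunc_S_0, exp_0 in *; lra).
  apply (derive_nonpos_le_init g (fun t => exp_trunc h t - exp t) y);
    [| |intros t Ht; specialize (IH t); lra | lra].
  - apply right_cont_of_cont, (is_derive_cont g 0 _ (Hg 0)).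
  - intros t _; apply Hg.
Qed.

Lemma mul_exp_trunc_le h y : 0 <= y -> y * exp_trunc h y <= INR h * exp_trunc (S h) y.
Proof.
  intros Hy; induction h as [|h IH]; [simpl; lra|].
  change (exp_trunc (S h) y) with (exp_trunc h y + y ^ h / INR (fact h)) at 1.
  change (exp_trunc (S (S h)) y) with (exp_trunc (S h) y + y ^ S h / INR (fact (S h))).
  assert (Hnn := exp_trunc_nonneg (S h) y Hy).
  assert (E : INR (S h) * (y ^ S h / INR (fact (S h))) = y * (y ^ h / INR (fact h))).
  { change (fact (S h)) with (S h * fact h)%nat. rewrite mult_INR. simpl pow.
    field. split; [apply INR_fact_neq_0 | apply not_0_INR; lia]. }
  rewrite !Rmult_plus_distr_l, E, S_INR. nra.
Qed.

Lemma erlang_tail_O c t : erlang_tail c O t = 0.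
Proof. unfold erlang_tail; simpl; ring. Qed.

Lemma erlang_tail_S_0 c h : erlang_tail c (S h) 0 = 1.
Proof. unfold erlang_tail. rewrite Rmult_0_r, Ropp_0, exp_0, exp_trunc_S_0. ring. Qed.

Lemma erlang_tail_nonneg c h t : 0 <= c -> 0 <= t -> 0 <= erlang_tail c h t.
Proof.
  intros Hc Ht. apply Rmult_le_pos; [left; apply exp_pos | apply exp_trunc_nonneg; nra].
Qed.

Lemma erlang_tail_le_S c h t : 0 <= c -> 0 <= t -> erlang_tail c h t <= erlang_tail c (S h) t.
Proof.
  intros Hc Ht. apply Rmult_le_compat_l; [left; apply exp_pos | apply exp_trunc_le_S; nra].
Qed.

Lemma is_derive_erlang_tail c h (t : R) :
  is_derive (erlang_tail c (S h)) t (- c * (erlang_tail c (S h) t - erlang_tail c h t)).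
Proof.
  assert (Hexp : is_derive (fun s => exp (- (c * s))) t (- c * exp (- (c * t)))).
  { replace (- c * exp (- (c * t))) with (- (c * 1) * exp (- (c * t))) by ring.
    apply (is_derive_comp exp (fun s => - (c * s))); [apply is_derive_exp|].
    apply (is_derive_opp (fun s => c * s)), is_derive_scal, (is_derive_id t). }
  assert (Htrunc : is_derive (fun s => exp_trunc (S h) (c * s)) t (c * exp_trunc h (c * t))).
  { replace (c * exp_trunc h (c * t)) with (c * 1 * exp_trunc h (c * t)) by ring.
    apply (is_derive_comp (exp_trunc (S h)) (fun s => c * s)); [apply is_derive_exp_trunc|].
    apply is_derive_scal, (is_derive_id t). }
  unfold erlang_tail.
  replace (- c * _) with (- c * exp (- (c * t)) * exp_trunc (S h) (c * t)
                          + exp (- (c * t)) * (c * exp_trunc h (c * t))) by ring.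
  exact (is_derive_mult _ _ t _ _ Hexp Htrunc Rmult_comm).
Qed.

Lemma erlang_tail_right_cont c h :
  filterlim (erlang_tail c h) (at_right 0) (locally (erlang_tail c h 0)).
Proof.
  destruct h as [|h].
  - apply (filterlim_ext (fun _ => 0)); [intros; now rewrite erlang_tail_O|].
    rewrite erlang_tail_O. apply lim_const.
  - apply right_cont_of_cont, (is_derive_cont _ 0 _ (is_derive_erlang_tail c h 0)).
Qed.

Lemma erlang_tail_le_inv c h t : 0 < c -> 0 < t -> erlang_tail c h t <= INR h / (c * t).
Proof.
  intros Hc Ht. unfold erlang_tail. set (y := c * t). assert (Hy : 0 < y) by (unfold y; nra).
  assert (H1 := mul_exp_trunc_le h y ltac:(lra)).
  assert (H2 := exp_trunc_le_exp (S h) y ltac:(lra)).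
  assert (H3 : exp (- y) * exp y = 1) by (rewrite <- exp_plus, Rplus_opp_l; apply exp_0).
  assert (H4 := exp_pos (- y)). assert (H5 := pos_INR h).
  apply Rmult_le_reg_l with y; auto. replace (y * (INR h / y)) with (INR h) by (field; lra).
  apply Rle_trans with (exp (- y) * (INR h * exp_trunc (S h) y)); [nra|].
  apply Rle_trans with (exp (- y) * (INR h * exp y)); [|nra].
  apply Rmult_le_compat_l; [lra | apply Rmult_le_compat_l; lra].
Qed.

Lemma is_derive_erlang_tail_int c h (t : R) : c <> 0 ->
  is_derive (erlang_tail_int c h) t (erlang_tail c h t).
Proof.
  intros Hc. induction h as [|h IH].
  - rewrite erlang_tail_O. apply (is_derive_const 0 t).
  - set (e := erlang_tail c).
    assert (Hstep : is_derive (fun s => (1 - e (S h) s) / c) t (e (S h) t - e h t)).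
    { apply (is_derive_ext (fun s => / c * (1 - e (S h) s))); [intros s; apply Rmult_comm|].
      replace (e (S h) t - e h t) with (/ c * (0 - - c * (e (S h) t - e h t))) by (field; auto).
      apply is_derive_scal, (is_derive_minus (fun _ => 1) (e (S h)));
        [apply (is_derive_const 1 t) | apply is_derive_erlang_tail]. }
    replace (e (S h) t) with (e h t + (e (S h) t - e h t)) by ring.
    exact (is_derive_plus (erlang_tail_int c h) _ t _ _ IH Hstep).
Qed.

Lemma erlang_tail_int_0 c h : erlang_tail_int c h 0 = 0.
Proof. induction h as [|h IH]; simpl; auto. rewrite IH, erlang_tail_S_0. unfold Rdiv; ring. Qed.

Lemma erlang_tail_int_le c h t : 0 < c -> 0 <= t -> erlang_tail_int c h t <= INR h / c.
Proof.
  intros Hc Ht. induction h as [|h IH]; [simpl; unfold Rdiv; lra|].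
  simpl erlang_tail_int. rewrite S_INR.
  assert (0 <= erlang_tail c (S h) t) by (apply erlang_tail_nonneg; lra).
  assert ((1 - erlang_tail c (S h) t) / c <= 1 / c)
    by (apply Rmult_le_compat_r; [left; apply Rinv_0_lt_compat; auto | lra]).
  unfold Rdiv in *. lra.
Qed.

(** * Paths in the interaction graph and diameters *)

Lemma has_path_cons N A b k a : has_path N A b k -> (1 <= a <= N)%nat -> a <> b -> 0 < A a b ->
  has_path N A a (S k).
Proof.
  intros [p [Hlen [Hhd [Hlast [Hrange Hedges]]]]] Ha Hab HA.
  destruct p as [|b' q]; [discriminate|]. simpl in Hhd; subst b'.
  exists (a :: b :: q). repeat split; simpl in *; auto; lia.
Qed.

Section Hierarchy.
Variables (N : nat) (A : nat -> nat -> R).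
Hypothesis Hhier : hier_leader N A.

Lemma has_path_exists a : (1 <= a <= N)%nat -> exists k, has_path N A a k.
Proof.
  induction a as [a IH] using lt_wf_ind. intros Ha.
  destruct (Nat.eq_dec a 1) as [->|Hne].
  - exists O, [1%nat]. repeat split; simpl; auto.
  - destruct (proj2 Hhier a ltac:(lia)) as [b [Hb HA]].
    destruct (IH b ltac:(lia) ltac:(lia)) as [k Hk].
    exists (S k). apply has_path_cons with b; auto; lia.
Qed.

Lemma has_path_leader k : has_path N A 1 k -> k = O.
Proof.
  intros [p [Hlen [Hhd [_ [Hrange Hedges]]]]].
  destruct p as [|b [|w q]]; [discriminate | simpl in Hlen; lia|]. simpl in Hhd; subst b.
  destruct Hedges as [[_ HA] _]. inversion Hrange as [|? ? H1 Hrange']; inversion Hrange'.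
  assert (w < 1)%nat by (apply (proj1 Hhier); auto). lia.
Qed.

Lemma has_path_le_height H a k :
  is_height N A H -> (1 <= a <= N)%nat -> has_path N A a k -> (k <= H)%nat.
Proof.
  intros [_ Hmax] Ha Hp. destruct (Nat.eq_dec a 1) as [->|Hne].
  - rewrite (has_path_leader k Hp). lia.
  - apply (Hmax a); auto; lia.
Qed.

End Hierarchy.

Lemma height_pos N A H : is_height N A H -> (1 <= H)%nat.
Proof.
  intros [[i [Hi [p [Hlen [Hhd [Hlast _]]]]]] _].
  destruct p as [|b [|w q]]; [discriminate | simpl in *; lia | simpl in *; lia].
Qed.

Definition pairs N := flat_map (fun i => map (fun j => (i, j)) (seq 1 N)) (seq 1 N).

Lemma diam_pairs N d y t :
  diam N d y t = fold_right Rmax 0 (map (fun p => dist d y (fst p) (snd p) t) (pairs N)).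
Proof.
  unfold diam, pairs. f_equal.
  generalize (seq 1 N) at 2 4. intros l.
  induction l as [|i l IH]; simpl; auto. now rewrite map_app, IH, map_map.
Qed.

Lemma in_pairs N p : In p (pairs N) -> (1 <= fst p <= N)%nat /\ (1 <= snd p <= N)%nat.
Proof.
  unfold pairs. intros Hp. apply in_flat_map in Hp as [i [Hi Hp]].
  apply in_map_iff in Hp as [j [<- Hj]]. apply in_seq in Hi, Hj. simpl; lia.
Qed.

Lemma dist_nonneg d y i j t : 0 <= dist d y i j t.
Proof. apply norm2_nonneg. Qed.

Lemma diam_nonneg N d y t : 0 <= diam N d y t.
Proof. apply fold_max_ge_init. Qed.

Lemma dist_le_diam N d y i j t :
  (1 <= i <= N)%nat -> (1 <= j <= N)%nat -> dist d y i j t <= diam N d y t.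
Proof.
  intros Hi Hj. apply fold_max_ge, in_flat_map. exists i. split; [apply in_seq; lia|].
  apply (in_map (fun j => dist d y i j t)), in_seq. lia.
Qed.

Lemma dist_le_of_diam_le N d y t r i j : diam N d y t <= r ->
  (1 <= i <= N)%nat -> (1 <= j <= N)%nat -> 0 <= dist d y i j t <= r.
Proof.
  intros Hr Hi Hj. split; [apply dist_nonneg|].
  eapply Rle_trans; [apply dist_le_diam|]; eauto.
Qed.

Lemma diam_lub N d y t b : 0 <= b ->
  (forall i j, (1 <= i <= N)%nat -> (1 <= j <= N)%nat -> dist d y i j t <= b) -> diam N d y t <= b.
Proof.
  intros Hb Hdist. rewrite diam_pairs. apply fold_max_lub; auto.
  intros z Hz. apply in_map_iff in Hz as [p [<- Hp]]. apply in_pairs in Hp. apply Hdist; tauto.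
Qed.

Lemma lim_diam {F} {FF : Filter F} N d (y : state) t0 :
  (forall i k, (1 <= i <= N)%nat -> (k < d)%nat -> filterlim (y i k) F (locally (y i k t0))) ->
  filterlim (diam N d y) F (locally (diam N d y t0)).
Proof.
  intros Hy. rewrite diam_pairs.
  apply (filterlim_ext
    (fun t => fold_right Rmax 0 (map (fun p => dist d y (fst p) (snd p) t) (pairs N))));
    [intros; now rewrite diam_pairs|].
  apply (lim_fold_max (pairs N) (fun p t => dist d y (fst p) (snd p) t)).
  intros p Hp. apply in_pairs in Hp. unfold dist, norm2.
  eapply filterlim_comp; [|apply continuous_sqrt].
  apply (lim_Rsum _ (fun k t => (y (fst p) k t - y (snd p) k t) ^ 2)).
  intros k Hk. apply in_seq in Hk. simpl pow.
  apply lim_mult; [|apply lim_mult; [|apply lim_const]]; apply lim_minus; apply Hy; tauto || lia.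
Qed.

(** * Leader-follower consensus with a lower bound on the influence *)

Section LinearConsensus.
Variables (N d : nat) (alpha : R) (Q : R -> nat -> nat -> R) (x v : state).
Variables (A : nat -> nat -> R) (H : nat) (c r : R).
Hypothesis HN : (1 <= N)%nat.
Hypothesis Halpha : 0 <= alpha.
Hypothesis Hc : 0 < c.
Hypothesis Hsol : is_solution N d alpha Q x v.
Hypothesis HQ_nonneg : forall t i j, 0 < t -> (1 <= i <= N)%nat -> (1 <= j <= N)%nat ->
  0 <= Q t i j.
Hypothesis HQ_supp : forall t i j, 0 < t -> (1 <= i <= N)%nat -> (1 <= j <= N)%nat ->
  0 < Q t i j -> 0 < A i j.
Hypothesis Hhier : hier_leader N A.
Hypothesis Hheight : is_height N A H.
Hypothesis HQ_lower : forall t, 0 < t -> diam N d x t <= r ->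
  forall i, (1 < i <= N)%nat -> c <= alpha * sum_ne N i (Q t i).

Lemma Q_leader t j : 0 < t -> (1 <= j <= N)%nat -> Q t 1 j = 0.
Proof.
  intros Ht Hj. assert (H1 : (1 <= 1 <= N)%nat) by lia.
  destruct (HQ_nonneg t 1 j Ht H1 Hj) as [Hpos|Hz]; [exfalso | now symmetry].
  assert (j < 1)%nat by exact (proj1 Hhier 1%nat j H1 Hj (HQ_supp t 1 j Ht H1 Hj Hpos)). lia.
Qed.

Definition lead_proj (phi : nat -> R) (a : nat) (t : R) : R :=
  dot d phi (fun k => v a k t - v 1%nat k t).

Lemma lead_proj_leader phi t : lead_proj phi 1 t = 0.
Proof. apply Rsum_eq0. intros; ring. Qed.

Lemma lead_proj_opp phi a t : lead_proj (fun k => - phi k) a t = - lead_proj phi a t.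
Proof.
  unfold lead_proj. transitivity (-1 * dot d phi (fun k => v a k t - v 1%nat k t)); [|ring].
  unfold dot. rewrite <- Rsum_scal_l. apply Rsum_ext. intros; ring.
Qed.

Lemma lead_proj_right_cont phi a : (1 <= a <= N)%nat ->
  filterlim (lead_proj phi a) (at_right 0) (locally (lead_proj phi a 0)).
Proof.
  intros Ha. apply (lim_Rsum _ (fun k t => phi k * (v a k t - v 1%nat k t))).
  intros k Hk. apply in_seq in Hk.
  apply lim_mult; [apply lim_const | apply lim_minus]; apply Hsol; lia.
Qed.

Lemma is_derive_lead_proj phi a t : 0 < t -> (1 <= a <= N)%nat ->
  is_derive (lead_proj phi a) t
    (alpha * sum_ne N a (fun j => Q t a j * (lead_proj phi j t - lead_proj phi a t))).
Proof.
  intros Ht Ha.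
  set (dv := fun i k => alpha * sum_ne N i (fun j => Q t i j * (v j k t - v i k t))).
  assert (Hdv1 : forall k, dv 1%nat k = 0).
  { intros k. unfold dv, sum_ne. rewrite Rsum_eq0; [ring|].
    intros j Hj. apply in_sum_ne_range in Hj. rewrite Q_leader; [ring | auto | tauto]. }
  replace (alpha * _) with (Rsum (seq 0 d) (fun k => phi k * (dv a k - dv 1%nat k))).
  - apply (is_derive_Rsum _ (fun k t => phi k * (v a k t - v 1%nat k t))).
    intros k Hk. apply in_seq in Hk.
    apply is_derive_scal, (is_derive_minus (v a k) (v 1%nat k)); apply Hsol; auto; lia.
  - unfold sum_ne. set (J := filter (fun j => negb (Nat.eqb j a)) (seq 1 N)).
    transitivity (alpha * Rsum J (fun j =>
      Rsum (seq 0 d) (fun k => Q t a j * (phi k * (v j k t - v a k t))))).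
    + rewrite Rsum_comm, <- Rsum_scal_l. apply Rsum_ext. intros k _.
      rewrite Hdv1, Rminus_0_r. unfold dv, sum_ne. fold J.
      rewrite Rmult_comm, Rmult_assoc, <- Rsum_scal_r. f_equal. apply Rsum_ext. intros; ring.
    + f_equal. apply Rsum_ext. intros j _. unfold lead_proj, dot.
      rewrite <- Rsum_minus, <- Rsum_scal_l. apply Rsum_ext. intros; ring.
Qed.

Lemma lead_proj_drift_le phi a s K : 0 < s -> diam N d x s <= r -> (1 < a <= N)%nat ->
  (forall b, (1 <= b <= N)%nat -> 0 < A a b -> lead_proj phi b s <= K) -> K < lead_proj phi a s ->
  alpha * sum_ne N a (fun j => Q s a j * (lead_proj phi j s - lead_proj phi a s))
    <= c * (K - lead_proj phi a s).
Proof.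
  intros Hs Hd Ha Hnb HK. set (y := lead_proj phi a s) in *. set (S0 := sum_ne N a (Q s a)).
  assert (Havg : sum_ne N a (fun j => Q s a j * (lead_proj phi j s - y)) <= S0 * (K - y)).
  { apply Rsum_weighted_le; intros j Hj; apply in_sum_ne_range in Hj.
    - apply HQ_nonneg; tauto || lia.
    - intros HQ. apply Hnb; [tauto | apply (HQ_supp s); tauto || lia]. }
  assert (Hinfl : c <= alpha * S0) by (apply HQ_lower; auto).
  assert (alpha * sum_ne N a (fun j => Q s a j * (lead_proj phi j s - y)) <= alpha * S0 * (K - y))
    by (rewrite Rmult_assoc; apply Rmult_le_compat_l; auto).
  assert ((K - y) * (alpha * S0) <= (K - y) * c) by (apply Rmult_le_compat_neg_l; lra).
  lra.
Qed.

Lemma lead_proj_le_erlang phi M T :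
  0 <= M -> (forall a, (1 <= a <= N)%nat -> lead_proj phi a 0 <= M) ->
  (forall t, 0 < t <= T -> diam N d x t <= r) ->
  forall a h, (1 <= a <= N)%nat -> (forall k, has_path N A a k -> (k <= h)%nat) ->
  forall t, 0 <= t <= T -> lead_proj phi a t <= M * erlang_tail c h t.
Proof.
  intros HM HM0 Hconf a. induction a as [a IH] using lt_wf_ind. intros h Ha Hh t Ht.
  destruct (Nat.eq_dec a 1) as [->|Ha1].
  { rewrite lead_proj_leader.
    assert (0 <= erlang_tail c h t) by (apply erlang_tail_nonneg; lra). nra. }
  destruct (proj2 Hhier a ltac:(lia)) as [b0 [Hb0 HAb0]].
  destruct (has_path_exists N A Hhier b0 ltac:(lia)) as [k0 Hk0].
  destruct h as [|h]; [specialize (Hh _ (has_path_cons N A b0 k0 a Hk0 Ha ltac:(lia) HAb0)); lia|].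
  assert (IHnb : forall b s, (1 <= b <= N)%nat -> 0 < A a b -> 0 <= s <= T ->
                   lead_proj phi b s <= M * erlang_tail c h s).
  { intros b s Hb HAb Hs. assert (Hba : (b < a)%nat) by (apply (proj1 Hhier); auto).
    apply IH; auto. intros k Hk.
    enough (S k <= S h)%nat by lia. apply Hh, has_path_cons with b; auto; lia. }
  set (e := erlang_tail c).
  set (f := fun s => lead_proj phi a s - M * e (S h) s).
  enough (f t <= 0) by (unfold f in *; lra).
  apply (comparison_principle f
    (fun s => alpha * sum_ne N a (fun j => Q s a j * (lead_proj phi j s - lead_proj phi a s))
              - M * (- c * (e (S h) s - e h s))) T); auto.
  - apply lim_minus; [apply lead_proj_right_cont, Ha|].
    apply lim_mult; [apply lim_const | apply erlang_tail_right_cont].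
  - intros s Hs. apply (is_derive_minus (lead_proj phi a) (fun s => M * e (S h) s));
      [apply is_derive_lead_proj; auto | apply is_derive_scal, is_derive_erlang_tail].
  - unfold f, e. rewrite erlang_tail_S_0. specialize (HM0 a Ha). lra.
  - intros s Hs Hpos. unfold f in Hpos.
    assert (HeS : M * e h s <= M * e (S h) s)
      by (apply Rmult_le_compat_l; [auto | apply erlang_tail_le_S; lra]).
    assert (Hdrift := lead_proj_drift_le phi a s (M * e h s) ltac:(lra) (Hconf s Hs) ltac:(lia)).
    enough (alpha * sum_ne N a (fun j => Q s a j * (lead_proj phi j s - lead_proj phi a s))
            <= c * (M * e h s - lead_proj phi a s)) by nra.
    apply Hdrift; [|lra]. intros b Hb HAb. apply IHnb; auto; lra.
Qed.

Lemma lead_proj_argmax phi : exists p, (1 <= p <= N)%nat /\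
  forall a, (1 <= a <= N)%nat -> lead_proj phi a 0 <= lead_proj phi p 0.
Proof.
  set (l := map (fun a => lead_proj phi a 0) (seq 1 N)).
  set (m := fold_right Rmax (lead_proj phi 1 0) l).
  assert (Hm : forall a, (1 <= a <= N)%nat -> lead_proj phi a 0 <= m).
  { intros a Ha. apply fold_max_ge. apply (in_map (fun a => lead_proj phi a 0)), in_seq. lia. }
  destruct (fold_max_attained (lead_proj phi 1 0) l) as [E|E]; fold m in E.
  - exists 1%nat. split; [lia|]. rewrite <- E. exact Hm.
  - apply in_map_iff in E as [p [E Hp]]. apply in_seq in Hp.
    exists p. split; [lia|]. rewrite E. exact Hm.
Qed.

Lemma vel_dist_le_erlang T : (forall t, 0 < t <= T -> diam N d x t <= r) ->
  forall i j t, (1 <= i <= N)%nat -> (1 <= j <= N)%nat -> 0 <= t <= T ->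
  dist d v i j t <= diam N d v 0 * erlang_tail c H t.
Proof.
  intros Hconf i j t Hi Hj Ht.
  set (phi := fun k => v i k t - v j k t). set (n := norm2 d phi). set (e := erlang_tail c H t).
  assert (He : 0 <= e) by (apply erlang_tail_nonneg; lra).
  assert (Hpath : forall a, (1 <= a <= N)%nat -> forall k, has_path N A a k -> (k <= H)%nat)
    by (intros; eapply has_path_le_height; eauto).
  (* Bounding the initial projections by their extreme values rather than by
     [n V(0)] each avoids losing a factor 2. *)
  destruct (lead_proj_argmax phi) as [p [Hp Hmax]].
  destruct (lead_proj_argmax (fun k => - phi k)) as [q [Hq Hmin]].
  assert (HM : 0 <= lead_proj phi p 0)
    by (rewrite <- (lead_proj_leader phi 0) at 1; apply Hmax; lia).
  assert (HM' : 0 <= lead_proj (fun k => - phi k) q 0)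
    by (rewrite <- (lead_proj_leader (fun k => - phi k) 0) at 1; apply Hmin; lia).
  assert (Hup := lead_proj_le_erlang phi _ T HM Hmax Hconf i H Hi (Hpath i Hi) t Ht).
  assert (Hlow := lead_proj_le_erlang _ _ T HM' Hmin Hconf j H Hj (Hpath j Hj) t Ht).
  rewrite (lead_proj_opp phi j t), (lead_proj_opp phi q 0) in Hlow.
  rewrite lead_proj_opp in HM'. fold e in Hup, Hlow.
  assert (Hsq : lead_proj phi i t - lead_proj phi j t = n * n).
  { unfold n. rewrite norm2_sqr. unfold lead_proj, dot. rewrite <- Rsum_minus.
    apply Rsum_ext. intros; unfold phi; ring. }
  assert (Hspread : lead_proj phi p 0 - lead_proj phi q 0 <= n * diam N d v 0).
  { replace (lead_proj phi p 0 - lead_proj phi q 0) with (dot d phi (fun k => v p k 0 - v q k 0))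
      by (unfold lead_proj, dot; rewrite <- Rsum_minus; apply Rsum_ext; intros; ring).
    eapply Rle_trans; [apply Cauchy_Schwarz|].
    apply Rmult_le_compat_l; [apply norm2_nonneg | apply dist_le_diam; auto]. }
  apply le_of_sqr_le_mul; [apply norm2_nonneg | apply Rmult_le_pos; auto; apply diam_nonneg |].
  change (dist d v i j t) with n. nra.
Qed.

Lemma diam_x_le_a_priori T : (forall t, 0 < t <= T -> diam N d x t <= r) ->
  forall t, 0 <= t <= T -> diam N d x t <= diam N d x 0 + diam N d v 0 * INR H / c.
Proof.
  intros Hconf t Ht.
  assert (HV := diam_nonneg N d v 0). assert (HX := diam_nonneg N d x 0).
  assert (HHc : 0 <= INR H / c) by (apply Rdiv_le_0_compat; [apply pos_INR | auto]).
  apply diam_lub; [unfold Rdiv in *; nra|]. intros i j Hi Hj.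
  set (G := fun s => diam N d v 0 * erlang_tail_int c H s).
  assert (Hmvi := norm2_le_of_derive d (fun k s => x i k s - x j k s) (fun k s => v i k s - v j k s)
            G (fun s => diam N d v 0 * erlang_tail c H s) T).
  eapply Rle_trans; [apply Hmvi; auto|].
  - intros k Hk. apply lim_minus; apply Hsol; auto.
  - intros k s Hk Hs. apply (is_derive_minus (x i k) (x j k)); apply Hsol; auto.
  - apply right_cont_of_cont, (is_derive_cont _ 0 (diam N d v 0 * erlang_tail c H 0)).
    apply is_derive_scal, is_derive_erlang_tail_int. lra.
  - intros s Hs. apply is_derive_scal, is_derive_erlang_tail_int. lra.
  - intros s Hs. apply (vel_dist_le_erlang T); auto; lra.
  - unfold G. rewrite erlang_tail_int_0, Rmult_0_r, Rminus_0_r.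
    assert (Hint := erlang_tail_int_le c H t Hc ltac:(lra)).
    assert (dist d x i j 0 <= diam N d x 0) by (apply dist_le_diam; auto).
    assert (diam N d v 0 * erlang_tail_int c H t <= diam N d v 0 * (INR H / c))
      by (apply Rmult_le_compat_l; auto).
    unfold dist in *. unfold Rdiv in *. lra.
Qed.

Lemma diam_x_le_r : diam N d x 0 + diam N d v 0 * INR H / c < r ->
  forall t, 0 <= t -> diam N d x t <= r.
Proof.
  intros Hr. assert (HV := diam_nonneg N d v 0).
  assert (HHc : 0 <= INR H / c) by (apply Rdiv_le_0_compat; [apply pos_INR | auto]).
  apply (bootstrap (diam N d x)) with (rho := diam N d x 0 + diam N d v 0 * INR H / c); auto.
  - apply lim_diam. intros i k Hi Hk. apply Hsol; auto.
  - intros t Ht. apply lim_diam. intros i k Hi Hk.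
    apply (is_derive_cont _ t (v i k t)). apply Hsol; auto.
  - unfold Rdiv in *. nra.
  - intros T HT Hle. apply diam_x_le_a_priori. intros t Ht. apply Hle. lra.
Qed.

Theorem flocks_of_influence_lower_bound :
  diam N d x 0 + diam N d v 0 * INR H / c < r -> flocks N d x v.
Proof.
  intros Hr. assert (Hconf := diam_x_le_r Hr). split; [exists r; exact Hconf|].
  set (K := diam N d v 0 * INR H / c).
  apply (is_lim_le_le_loc (fun _ => 0) (fun t => K * / t)).
  - exists 0. intros t Ht. split; [apply diam_nonneg|].
    apply Rle_trans with (diam N d v 0 * erlang_tail c H t).
    + apply diam_lub; [apply Rmult_le_pos; [apply diam_nonneg | apply erlang_tail_nonneg; lra]|].
      intros i j Hi Hj. apply (vel_dist_le_erlang t); auto; [intros s Hs; apply Hconf|]; lra.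
    + replace (K * / t) with (diam N d v 0 * (INR H / (c * t))) by (unfold K; field; lra).
      apply Rmult_le_compat_l; [apply diam_nonneg | apply erlang_tail_le_inv; auto].
  - apply is_lim_const.
  - replace (Finite 0) with (Rbar_mult K (Rbar_inv p_infty)) by (simpl; f_equal; ring).
    apply is_lim_scal_l, is_lim_inv; [apply is_lim_id | discriminate].
Qed.

End LinearConsensus.

(** * The Cucker-Smale and Motsch-Tadmor weights *)

Lemma Lub_Rbar_lt_witness (E : R -> Prop) (k z : R) : 0 < k ->
  Rbar_lt z (Rbar_mult k (Lub_Rbar E)) -> exists y, E y /\ z < k * y.
Proof.
  intros Hk Hlt. apply NNPP. intros Hno.
  assert (Hub : is_ub_Rbar E (z / k)).
  { intros y Ey. simpl. apply Rnot_lt_le. intros Hy. apply Hno. exists y. split; auto.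
    apply Rmult_lt_compat_l with (r := k) in Hy; auto.
    now replace (k * (z / k)) with z in Hy by (field; lra). }
  assert (Hle := proj2 (Lub_Rbar_correct E) _ Hub).
  destruct (Lub_Rbar E) as [l| |]; simpl in Hle |- *; try contradiction.
  - simpl in Hlt. apply Rmult_le_compat_l with (r := k) in Hle; [|lra].
    replace (k * (z / k)) with z in Hle by (field; lra). lra.
  - unfold Rbar_mult, Rbar_mult' in Hlt.
    destruct (Rle_dec 0 k) as [Hk'|]; [|lra].
    destruct (Rle_lt_or_eq_dec 0 k Hk'); simpl in Hlt; auto; lra.
Qed.

Lemma a_priori_bound_lt V0 X0 r K c :
  0 < K -> 0 < c -> V0 < c / K * (r - X0) -> X0 + V0 * K / c < r.
Proof.
  intros HK Hc Hlt.
  apply Rmult_lt_compat_r with (r := K / c) in Hlt; [|apply Rdiv_lt_0_compat; auto].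
  replace (c / K * (r - X0) * (K / c)) with (r - X0) in Hlt by (field; lra).
  unfold Rdiv in *. lra.
Qed.

Lemma antitone_of_sign_condition (psi : R -> R) :
  (forall r1 r2, 0 <= r1 -> 0 <= r2 -> (r1 - r2) * (psi r1 - psi r2) <= 0) ->
  forall a b, 0 <= a -> a <= b -> psi b <= psi a.
Proof.
  intros Hsign a b Ha Hab. destruct (Req_dec a b) as [->|Hne]; [lra|].
  specialize (Hsign b a ltac:(lra) Ha). nra.
Qed.

(* The middle step rests on
   [(ai + R) (ab + As p) - (ab + As) (ai + R p) = (1 - p) (R ab - ai As) >= 0]. *)
Lemma mt_weight_lower_bound R S ai ab As p B :
  0 < p <= 1 -> 0 <= ai <= ab -> 0 < As <= R -> R * p <= S -> B <= R / (ai + R) ->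
  B * ((ab + As) * p / (ab + As * p)) <= S / (ai + S).
Proof.
  intros [Hp0 Hp1] [Hai0 Hai] [HAs0 HAs] HS HB.
  assert (HAsp : 0 < As * p) by (apply Rmult_lt_0_compat; auto).
  assert (Hden : 0 < ab + As * p) by lra.
  assert (HRp : 0 < R * p) by (apply Rmult_lt_0_compat; lra).
  assert (HX : 0 <= (ab + As) * p / (ab + As * p))
    by (apply Rdiv_le_0_compat; [apply Rmult_le_pos|]; lra).
  apply Rle_trans with (R / (ai + R) * ((ab + As) * p / (ab + As * p)));
    [apply Rmult_le_compat_r; auto|].
  apply Rle_trans with (R * p / (ai + R * p)).
  - set (D := (ai + R) * (ab + As * p) * (ai + R * p)).
    apply Rmult_le_reg_r with D; [unfold D; repeat apply Rmult_lt_0_compat; lra|].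
    replace (R / (ai + R) * ((ab + As) * p / (ab + As * p)) * D)
      with (R * p * ((ab + As) * (ai + R * p))) by (unfold D; field; repeat split; lra).
    replace (R * p / (ai + R * p) * D)
      with (R * p * ((ai + R) * (ab + As * p))) by (unfold D; field; repeat split; lra).
    apply Rmult_le_compat_l; [repeat apply Rmult_lt_0_compat; lra|].
    assert (0 <= (1 - p) * (R * ab - ai * As)) by (apply Rmult_le_pos; nra). nra.
  - apply Rmult_le_reg_r with ((ai + R * p) * (ai + S)); [repeat apply Rmult_lt_0_compat; lra|].
    replace (R * p / (ai + R * p) * ((ai + R * p) * (ai + S))) with (R * p * (ai + S))
      by (field; repeat split; lra).
    replace (S / (ai + S) * ((ai + R * p) * (ai + S))) with (S * (ai + R * p))
      by (field; repeat split; lra).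
    nra.
Qed.

Section Models.
Variables (N d : nat) (alpha : R) (A : nat -> nat -> R) (psi : R -> R) (H : nat).
Hypothesis HN : (2 <= N)%nat.
Hypothesis Halpha : 0 < alpha.
Hypothesis HA : forall i j, (1 <= i <= N)%nat -> (1 <= j <= N)%nat -> 0 <= A i j.
Hypothesis Hpsi_sign : forall r1 r2, 0 <= r1 -> 0 <= r2 -> (r1 - r2) * (psi r1 - psi r2) <= 0.
Hypothesis Hpsi : forall r, 0 <= r -> 0 < psi r /\ psi r <= psi 0.
Hypothesis Hpsi0 : psi 0 <= 1.
Hypothesis Hhier : hier_leader N A.
Hypothesis Hheight : is_height N A H.

Lemma INR_height_pos : 0 < INR H.
Proof. apply lt_0_INR. apply height_pos in Hheight. lia. Qed.

Lemma rowsum_pos i : (1 < i <= N)%nat -> 0 < rowsum N A i.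
Proof.
  intros Hi. destruct (proj2 Hhier i Hi) as [j [Hj HAj]].
  apply Rsum_pos with j; auto.
  - intros k Hk. apply in_sum_ne_range in Hk. apply HA; tauto || lia.
  - apply in_sum_ne_range. lia.
Qed.

Lemma Astar_pos : 0 < Astar N A.
Proof. apply min_gt1_pos; auto. intros i Hi. apply rowsum_pos. lia. Qed.

Lemma weighted_rowsum_ge (D : nat -> R) r i :
  (forall j, (1 <= j <= N)%nat -> 0 <= D j <= r) -> (1 <= i <= N)%nat ->
  rowsum N A i * psi r <= sum_ne N i (fun j => A i j * psi (D j)).
Proof.
  intros HD Hi. unfold rowsum, sum_ne. rewrite <- Rsum_scal_r. apply Rsum_le.
  intros j Hj. apply in_sum_ne_range in Hj. specialize (HD j (proj1 Hj)).
  apply Rmult_le_compat_l; [apply HA; tauto|].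
  apply (antitone_of_sign_condition psi Hpsi_sign); tauto.
Qed.

Lemma cs_flocking (x v : state) :
  is_solution N d alpha (Q_CS d A psi x) x v ->
  Rbar_lt (diam N d v 0)
    (Rbar_mult (alpha * Astar N A / INR H)
       (Lub_Rbar (fun y => exists r, diam N d x 0 <= r /\ y = (r - diam N d x 0) * psi r))) ->
  flocks N d x v.
Proof.
  intros Hsol Hlt. assert (HH := INR_height_pos). assert (HAs := Astar_pos).
  assert (Hk : 0 < alpha * Astar N A / INR H)
    by (apply Rdiv_lt_0_compat; [apply Rmult_lt_0_compat|]; auto).
  destruct (Lub_Rbar_lt_witness _ _ _ Hk Hlt) as [y [[r [Hr ->]] Hy]].
  assert (Hpr := proj1 (Hpsi r ltac:(pose proof (diam_nonneg N d x 0); lra))).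
  apply (flocks_of_influence_lower_bound N d alpha (Q_CS d A psi x) x v A H
           (alpha * Astar N A * psi r) r);
    auto; try lia; try lra.
  - apply Rmult_lt_0_compat; [apply Rmult_lt_0_compat|]; auto.
  - intros t i j _ Hi Hj. apply Rmult_le_pos; [apply HA; auto | apply Rlt_le, Hpsi, dist_nonneg].
  - intros t i j _ Hi Hj HQ. unfold Q_CS in HQ.
    destruct (HA i j Hi Hj) as [|HAz]; [auto | rewrite <- HAz in HQ; lra].
  - intros t _ Hd i Hi. unfold Q_CS.
    rewrite Rmult_assoc. apply Rmult_le_compat_l; [lra|].
    apply Rle_trans with (rowsum N A i * psi r).
    + apply Rmult_le_compat_r; [lra | apply min_gt1_le; lia].
    + apply weighted_rowsum_ge; [|lia]. intros j Hj. apply (dist_le_of_diam_le N); auto; lia.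
  - apply a_priori_bound_lt; auto; [apply Rmult_lt_0_compat; [apply Rmult_lt_0_compat|]; auto|].
    replace (alpha * Astar N A * psi r / INR H * (r - diam N d x 0))
      with (alpha * Astar N A / INR H * ((r - diam N d x 0) * psi r)) by (field; lra). exact Hy.
Qed.

Section MotschTadmor.
Variable a : nat -> R.
Hypothesis Ha : forall i, (1 <= i <= N)%nat -> 0 <= a i.

Lemma A_leader_row j : (1 <= j <= N)%nat -> A 1 j = 0.
Proof.
  intros Hj. assert (H1 : (1 <= 1 <= N)%nat) by lia.
  destruct (HA 1 j H1 Hj) as [Hpos|]; [exfalso | auto].
  assert (j < 1)%nat by exact (proj1 Hhier 1%nat j H1 Hj Hpos). lia.
Qed.

Lemma mt_denominator_pos (x : state) t i : (1 < i <= N)%nat ->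
  0 < a i + sum_ne N i (fun k => A i k * psi (dist d x i k t)).
Proof.
  intros Hi. assert (Hr := diam_nonneg N d x t).
  assert (Hlow := weighted_rowsum_ge (fun k => dist d x i k t) (diam N d x t) i).
  assert (rowsum N A i * psi (diam N d x t) > 0)
    by (apply Rmult_lt_0_compat; [apply rowsum_pos, Hi | apply Hpsi, Hr]).
  assert (0 <= a i) by (apply Ha; lia).
  enough (rowsum N A i * psi (diam N d x t)
          <= sum_ne N i (fun k => A i k * psi (dist d x i k t))) by lra.
  apply Hlow; [intros j Hj; apply (dist_le_of_diam_le N); [apply Rle_refl | lia | exact Hj] | lia].
Qed.

Lemma Bstar_pos : 0 < Bstar N A a.
Proof.
  apply min_gt1_pos; auto. intros i Hi. unfold Bmat. rewrite sum_ne_div. fold (rowsum N A i).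
  assert (0 < rowsum N A i) by (apply rowsum_pos; lia). assert (0 <= a i) by (apply Ha; lia).
  apply Rdiv_lt_0_compat; lra.
Qed.

Lemma mt_influence_lower_bound (x : state) t r i :
  0 <= r -> diam N d x t <= r -> (1 < i <= N)%nat ->
  alpha * Bstar N A a * ((abar N a + Astar N A) * psi r / (abar N a + Astar N A * psi r))
    <= alpha * sum_ne N i (Q_MT N d A a psi x t i).
Proof.
  intros Hr Hd Hi. rewrite Rmult_assoc. apply Rmult_le_compat_l; [lra|].
  unfold Q_MT. rewrite sum_ne_div.
  apply (mt_weight_lower_bound (rowsum N A i)).
  - specialize (Hpsi r Hr). lra.
  - split; [apply Ha; lia | apply max_gt1_ge; lia].
  - split; [apply Astar_pos | apply min_gt1_le; lia].
  - apply weighted_rowsum_ge; [intros j Hj; apply (dist_le_of_diam_le N); auto; lia | lia].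
  - apply Rle_trans with (sum_ne N i (Bmat N A a i));
      [apply (min_gt1_le N (fun i => sum_ne N i (Bmat N A a i))); lia|].
    unfold Bmat. rewrite sum_ne_div. apply Rle_refl.
Qed.

Lemma mt_flocking_at (x v : state) c r :
  is_solution N d alpha (Q_MT N d A a psi x) x v -> 0 < c -> 0 <= r ->
  c <= alpha * Bstar N A a * ((abar N a + Astar N A) * psi r / (abar N a + Astar N A * psi r)) ->
  diam N d x 0 + diam N d v 0 * INR H / c < r -> flocks N d x v.
Proof.
  intros Hsol Hc Hr Hcr Hlt.
  apply (flocks_of_influence_lower_bound N d alpha (Q_MT N d A a psi x) x v A H c r);
    auto; try lia; try lra.
  - intros t i j _ Hi Hj. destruct (Nat.eq_dec i 1) as [->|Hi1].
    + unfold Q_MT. rewrite A_leader_row by auto. unfold Rdiv. lra.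
    + apply Rdiv_le_0_compat; [|apply mt_denominator_pos; lia].
      apply Rmult_le_pos; [apply HA; auto | apply Rlt_le, Hpsi, dist_nonneg].
  - intros t i j _ Hi Hj HQ. unfold Q_MT in HQ.
    destruct (HA i j Hi Hj) as [|HAz]; [auto | rewrite <- HAz in HQ; unfold Rdiv in HQ; lra].
  - intros t _ Hd i Hi. eapply Rle_trans; [exact Hcr | apply mt_influence_lower_bound; auto].
Qed.

Lemma abar_nonneg : 0 <= abar N a.
Proof. apply Rle_trans with (a 2%nat); [apply Ha; lia | apply max_gt1_ge; lia]. Qed.

Lemma mt_flocking (x v : state) :
  is_solution N d alpha (Q_MT N d A a psi x) x v ->
  Rbar_lt (diam N d v 0)
    (Rbar_mult (alpha * Bstar N A a / INR H)
       (Lub_Rbar (fun y => exists r, diam N d x 0 <= r /\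
          y = (r - diam N d x 0) * ((abar N a + Astar N A) * psi r)
                / (abar N a + Astar N A * psi r)))) ->
  flocks N d x v.
Proof.
  intros Hsol Hlt. assert (HH := INR_height_pos). assert (HB := Bstar_pos).
  assert (HAs := Astar_pos). assert (Hab := abar_nonneg).
  assert (Hk : 0 < alpha * Bstar N A a / INR H)
    by (apply Rdiv_lt_0_compat; [apply Rmult_lt_0_compat|]; auto).
  destruct (Lub_Rbar_lt_witness _ _ _ Hk Hlt) as [y [[r [Hr ->]] Hy]].
  assert (Hpr := proj1 (Hpsi r ltac:(pose proof (diam_nonneg N d x 0); lra))).
  assert (HAsp : 0 < Astar N A * psi r) by (apply Rmult_lt_0_compat; auto).
  set (g := (abar N a + Astar N A) * psi r / (abar N a + Astar N A * psi r)).
  assert (Hg : 0 < g) by (apply Rdiv_lt_0_compat; [apply Rmult_lt_0_compat|]; lra).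
  apply (mt_flocking_at x v (alpha * Bstar N A a * g) r Hsol);
    [apply Rmult_lt_0_compat; [apply Rmult_lt_0_compat|]; auto
    | pose proof (diam_nonneg N d x 0); lra | apply Rle_refl |].
  apply a_priori_bound_lt; auto; [apply Rmult_lt_0_compat; [apply Rmult_lt_0_compat|]; auto|].
  replace (alpha * Bstar N A a * g / INR H * (r - diam N d x 0)) with
    (alpha * Bstar N A a / INR H * ((r - diam N d x 0) * ((abar N a + Astar N A) * psi r)
                                     / (abar N a + Astar N A * psi r))) by (unfold g; field; lra).
  exact Hy.
Qed.

Lemma mt_flocking_unconditional (x v : state) : abar N a = 0 ->
  is_solution N d alpha (Q_MT N d A a psi x) x v -> flocks N d x v.
Proof.
  intros Hab0 Hsol.
  assert (HH := INR_height_pos). assert (HB := Bstar_pos). assert (HAs := Astar_pos).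
  assert (Hc : 0 < alpha * Bstar N A a) by (apply Rmult_lt_0_compat; auto).
  assert (HX := diam_nonneg N d x 0). assert (HV := diam_nonneg N d v 0).
  assert (HVH : 0 <= diam N d v 0 * INR H / (alpha * Bstar N A a))
    by (apply Rdiv_le_0_compat; [apply Rmult_le_pos; lra | auto]).
  set (r := diam N d x 0 + diam N d v 0 * INR H / (alpha * Bstar N A a) + 1).
  assert (Hpr := proj1 (Hpsi r ltac:(unfold r; lra))).
  apply (mt_flocking_at x v (alpha * Bstar N A a) r Hsol); auto; [unfold r; lra | | unfold r; lra].
  rewrite Hab0, !Rplus_0_l. right. field. split; apply Rgt_not_eq; auto.
Qed.

End MotschTadmor.

End Models.

Theorem theorem3p9 (N d : nat) (alpha : R) (A : nat -> nat -> R) (psi : R -> R)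
  (H : nat) :
  (2 <= N)%nat -> (1 <= d)%nat -> 0 < alpha ->
  (forall i j, (1 <= i <= N)%nat -> (1 <= j <= N)%nat -> 0 <= A i j) ->
  (forall r1 r2, 0 <= r1 -> 0 <= r2 -> (r1 - r2) * (psi r1 - psi r2) <= 0) ->
  (forall r, 0 <= r -> 0 < psi r /\ psi r <= psi 0) ->
  psi 0 <= 1 ->
  hier_leader N A ->
  is_height N A H ->
  (* Cucker-Smale model *)
  (forall x v : state,
     is_solution N d alpha (Q_CS d A psi x) x v ->
     Rbar_lt (diam N d v 0)
       (Rbar_mult (alpha * Astar N A / INR H)
          (Lub_Rbar (fun y => exists r, diam N d x 0 <= r /\
                        y = (r - diam N d x 0) * psi r))) ->
     flocks N d x v) /\
  (* Motsch-Tadmor model *)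
  (forall a : nat -> R,
     (forall i, (1 <= i <= N)%nat -> 0 <= a i) ->
     (forall i, (1 <= i <= N)%nat ->
        (forall j, (1 <= j <= N)%nat -> j <> i -> A i j = 0) -> 0 < a i) ->
     (forall x v : state,
        is_solution N d alpha (Q_MT N d A a psi x) x v ->
        Rbar_lt (diam N d v 0)
          (Rbar_mult (alpha * Bstar N A a / INR H)
             (Lub_Rbar (fun y => exists r, diam N d x 0 <= r /\
                 y = (r - diam N d x 0) * ((abar N a + Astar N A) * psi r)
                       / (abar N a + Astar N A * psi r)))) ->
        flocks N d x v) /\
     (abar N a = 0 ->
      forall x v : state,
        is_solution N d alpha (Q_MT N d A a psi x) x v ->
        flocks N d x v)).
Proof.
  intros HN _ Halpha HA Hpsi_sign Hpsi Hpsi0 Hhier Hheight. split.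
  - intros x v. apply cs_flocking; auto.
  -
    intros a Ha _. split.
    + intros x v. apply mt_flocking; auto.
    + intros Hab0 x v. eapply mt_flocking_unconditional; eauto.
Qed.
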